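(* Let $H \in \mathbb{R}^{r \times n}_+$ be an entrywise nonnegative matrix. Then $H$ satisfies the sufficiently scattered condition (SSC) if and only if both of the following hold: (1) $e - e_i \in \operatorname{cone}(H)$ for all $i \in \{1,\dots,r\}$; (2) the optimal value of $$q^* = \max_{x \in \mathbb{R}^r} \|x\|_2 \ \text{ subject to } \ e^\top x = 1,\ H^\top x \ge 0,\ -1 \le x_i \le 1 \text{ for all } i$$ equals $1$, and the set of optimal solutions of this problem is exactly $\{e_1,\dots,e_r\}$.
   Context: $e \in \mathbb{R}^r$ denotes the all-ones vector, $e_i$ the $i$-th standard unit vector of $\mathbb{R}^r$, $\|\cdot\|_2$ the Euclidean norm, and inequalities between vectors are entrywise. For $H \in \mathbb{R}^{r\times n}$, $\operatorname{cone}(H) = \{ Hy : y \in \mathbb{R}^n, y \ge 0\}$, and its dual cone is $\operatorname{cone}^*(H) = \{ x \in \mathbb{R}^r : x^\top z \ge 0 \ \forall z \in \operatorname{cone}(H)\} = \{x : H^\top x \ge 0\}$. A nonnegative matrix $H \in \mathbb{R}^{r\times n}_+$ satisfies the SSC if (SSC1) $\mathcal{C} = \{ x \in \mathbb{R}^r : e^\top x \ge \sqrt{r-1}\,\|x\|_2\} \subseteq \operatorname{cone}(H)$, and (SSC2) every $q \in \operatorname{cone}^*(H) \cap \{x \in \mathbb{R}^r : e^\top x = \|x\|_2\}$ is a scalar multiple of some unit vector $e_i$. *)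

From HB Require Import structures.
From mathcomp Require Import all_boot all_order all_algebra.
From mathcomp Require Import reals.
Set Implicit Arguments. Unset Strict Implicit. Unset Printing Implicit Defensive.
Import Order.TTheory GRing.Theory Num.Theory.
Local Open Scope ring_scope.

Section SSCDefs.
Variables (R : realType) (r n : nat).

Definition evec : 'cV[R]_r := const_mx 1.
Definition unitv (i : 'I_r) : 'cV[R]_r := delta_mx i 0.
Definition dotv (x y : 'cV[R]_r) : R := \sum_(i < r) x i 0 * y i 0.
Definition norm2 (x : 'cV[R]_r) : R := Num.sqrt (\sum_(i < r) x i 0 ^+ 2).
Definition nonneg_mx (p q : nat) (A : 'M[R]_(p, q)) : Prop :=
  forall i j, 0 <= A i j.

Definition in_cone (H : 'M[R]_(r, n)) (x : 'cV[R]_r) : Prop :=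
  exists y : 'cV[R]_n, nonneg_mx y /\ x = H *m y.
Definition in_dual_cone (H : 'M[R]_(r, n)) (x : 'cV[R]_r) : Prop :=
  forall z, in_cone H z -> 0 <= dotv x z.

Definition in_C (x : 'cV[R]_r) : Prop :=
  Num.sqrt (r%:R - 1) * norm2 x <= dotv evec x.

Definition SSC1 (H : 'M[R]_(r, n)) : Prop :=
  forall x, in_C x -> in_cone H x.
Definition SSC2 (H : 'M[R]_(r, n)) : Prop :=
  forall q, in_dual_cone H q -> dotv evec q = norm2 q ->
    exists i : 'I_r, exists a : R, q = a *: unitv i.
Definition SSC (H : 'M[R]_(r, n)) : Prop := SSC1 H /\ SSC2 H.

Definition feasible (H : 'M[R]_(r, n)) (x : 'cV[R]_r) : Prop :=
  [/\ dotv evec x = 1, nonneg_mx (H^T *m x) & forall i, -1 <= x i 0 <= 1].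

Definition is_opt_value (H : 'M[R]_(r, n)) (v : R) : Prop :=
  (exists x, feasible H x /\ norm2 x = v) /\
  (forall x, feasible H x -> norm2 x <= v).

Definition is_opt_solution (H : 'M[R]_(r, n)) (x : 'cV[R]_r) : Prop :=
  feasible H x /\ forall y, feasible H y -> norm2 y <= norm2 x.

End SSCDefs.

From HB Require Import structures.
From mathcomp Require Import all_boot all_order all_algebra.
From mathcomp Require Import reals ring lra.
Import Order.TTheory GRing.Theory Num.Theory.
Local Open Scope ring_scope.
Set Implicit Arguments. Unset Strict Implicit. Unset Printing Implicit Defensive.

(* Write C^* = {q : ||q|| <= e^T q} for the dual of the second-order cone C.
   By Farkas' lemma, SSC1 holds iff cone^*(H) is contained in C^*.  Given
   SSC1, every feasible x has ||x|| <= e^T x = 1 while every e_i is feasible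
   of norm 1, so q^* = 1; e - e_i lies on the boundary of C; and an optimal x
   satisfies e^T x = ||x||, so SSC2 makes it a unit vector.
   Conversely, (1) gives q_i <= e^T q on cone^*(H).  If some y in cone^*(H)
   with e^T y = 1 had norm > 1, the segment from e/r to y, which stays in
   cone^*(H), would cross the unit sphere at a feasible point, hence by (2)
   at some e_k; slightly beyond e_k the box constraints are still slack,
   giving a feasible point of norm > 1.  Hence cone^*(H) is contained in C^*,
   which is SSC1, and SSC2 follows from (2) after scaling q to e^T q = 1. *)

Lemma sqrtr_le_iff (R : rcfType) (a t : R) : 0 <= a ->
  Num.sqrt a <= t <-> 0 <= t /\ a <= t ^+ 2.
Proof.
move=> a_ge0; split=> [le_at | [t_ge0 le_at]].
  have t_ge0 : 0 <= t := le_trans (sqrtr_ge0 a) le_at.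
  by split; rewrite // -(sqr_sqrtr a_ge0) ler_sqr ?nnegrE ?sqrtr_ge0.
by rewrite -(ger0_norm t_ge0) -sqrtr_sqr ler_sqrt // sqr_ge0.
Qed.

Lemma oppr_mul_le_of_sqr_le (R : realFieldType) (a b c d s t : R) :
  0 < c -> 0 <= a -> 0 <= s -> 0 <= t ->
  a <= c * s ^+ 2 -> c * b <= t ^+ 2 -> d ^+ 2 <= a * b -> - (s * t) <= d.
Proof.
move=> c_gt0 a_ge0 s_ge0 t_ge0 a_le b_le d_le.
have cd_le : c * d ^+ 2 <= c * (s * t) ^+ 2.
  have : a * (c * b) <= a * t ^+ 2 by rewrite ler_wpM2l.
  have : a * t ^+ 2 <= c * s ^+ 2 * t ^+ 2 by rewrite ler_wpM2r ?sqr_ge0.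
  nra.
have : `|d| <= s * t.
  by rewrite -ler_sqr ?nnegrE ?mulr_ge0 // real_normK ?num_real // -(ler_pM2l c_gt0).
by rewrite ler_norml => /andP[].
Qed.

Section InnerProduct.
Variables (R : realType) (r : nat).
Implicit Types (x y z : 'cV[R]_r) (a : R).
Local Notation "''e'" := (evec R r).

Lemma dotvC x y : dotv x y = dotv y x.
Proof. by apply: eq_bigr => i _; rewrite mulrC. Qed.

Lemma dotvDl x y z : dotv (x + y) z = dotv x z + dotv y z.
Proof. by rewrite /dotv -big_split; apply: eq_bigr => i _; rewrite mxE mulrDl. Qed.

Lemma dotvZl a x y : dotv (a *: x) y = a * dotv x y.
Proof. by rewrite /dotv mulr_sumr; apply: eq_bigr => i _; rewrite mxE mulrA. Qed.

Lemma dotvNl x y : dotv (- x) y = - dotv x y.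
Proof. by rewrite -scaleN1r dotvZl mulN1r. Qed.

Lemma dotvBl x y z : dotv (x - y) z = dotv x z - dotv y z.
Proof. by rewrite dotvDl dotvNl. Qed.

Lemma dotvDr x y z : dotv x (y + z) = dotv x y + dotv x z.
Proof. by rewrite dotvC dotvDl !(dotvC x). Qed.

Lemma dotvZr a x y : dotv x (a *: y) = a * dotv x y.
Proof. by rewrite dotvC dotvZl dotvC. Qed.

Lemma dotvBr x y z : dotv x (y - z) = dotv x y - dotv x z.
Proof. by rewrite dotvC dotvBl !(dotvC x). Qed.

Lemma dotv0r x : dotv x 0 = 0.
Proof. by rewrite -(scale0r (0 : 'cV_r)) dotvZr mul0r. Qed.

Lemma dotvvE x : dotv x x = \sum_i x i 0 ^+ 2.
Proof. by apply: eq_bigr => i _; rewrite expr2. Qed.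

Lemma dotvv_ge0 x : 0 <= dotv x x.
Proof. by rewrite dotvvE sumr_ge0 // => i _; rewrite sqr_ge0. Qed.

Lemma sqr_coord_le_dotvv x i : x i 0 ^+ 2 <= dotv x x.
Proof. by rewrite dotvvE (bigD1 i) //= lerDl sumr_ge0 // => k _; rewrite sqr_ge0. Qed.

Lemma dotvv_eq0 x : (dotv x x == 0) = (x == 0).
Proof.
apply/eqP/eqP=> [xx0 | ->]; last by rewrite dotv0r.
apply/matrixP=> i j; rewrite (ord1 j) mxE; apply/eqP; rewrite -sqrf_eq0 eq_le sqr_ge0 andbT.
by rewrite -xx0 sqr_coord_le_dotvv.
Qed.

Lemma norm2E x : norm2 x = Num.sqrt (dotv x x).
Proof. by rewrite dotvvE. Qed.

Lemma sqr_norm2 x : norm2 x ^+ 2 = dotv x x.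
Proof. by rewrite norm2E sqr_sqrtr // dotvv_ge0. Qed.

Lemma norm2_ge0 x : 0 <= norm2 x.
Proof. exact: sqrtr_ge0. Qed.

Lemma abs_coord_le_norm2 x i : `|x i 0| <= norm2 x.
Proof.
by rewrite -ler_sqr ?nnegrE ?norm2_ge0 // sqr_norm2 real_normK ?num_real ?sqr_coord_le_dotvv.
Qed.

Lemma cauchy_schwarz x y : dotv x y ^+ 2 <= dotv x x * dotv y y.
Proof.
have [y0 | y_neq0] := eqVneq y 0; first by rewrite y0 !dotv0r expr0n mulr0.
have yy_gt0 : 0 < dotv y y by rewrite lt_def dotvv_eq0 y_neq0 dotvv_ge0.
have := dotvv_ge0 (dotv y y *: x - dotv x y *: y).
rewrite dotvBl !dotvBr !dotvZl !dotvZr (dotvC y x); nra.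
Qed.

Lemma dotv_unitv x i : dotv x (unitv R i) = x i 0.
Proof.
rewrite /dotv (bigD1 i) //= big1 => [|k /negbTE ki]; rewrite !mxE ?ki ?eqxx ?mulr0 //.
by rewrite mulr1 addr0.
Qed.

Lemma dotv_evecE x : dotv 'e x = \sum_i x i 0.
Proof. by apply: eq_bigr => i _; rewrite mxE mul1r. Qed.

Lemma dotv_evecvv : dotv 'e 'e = r%:R.
Proof. by rewrite dotv_evecE (eq_bigr (fun=> 1)) => [|i _]; rewrite ?sumr_const ?card_ord ?mxE. Qed.

Lemma dotv_evec_unitv (i : 'I_r) : dotv 'e (unitv R i) = 1.
Proof. by rewrite dotv_unitv mxE. Qed.

Lemma dotv_unitvv (i : 'I_r) : dotv (unitv R i) (unitv R i) = 1.
Proof. by rewrite dotv_unitv mxE !eqxx. Qed.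

Lemma norm2_unitv (i : 'I_r) : norm2 (unitv R i) = 1.
Proof. by rewrite norm2E dotv_unitvv sqrtr1. Qed.

Lemma norm2Z a x : norm2 (a *: x) = `|a| * norm2 x.
Proof.
rewrite !norm2E dotvZl dotvZr mulrA -expr2 sqrtrM ?sqr_ge0 //.
by rewrite sqrtr_sqr.
Qed.

Lemma sum_sumv_subr x : \sum_i (dotv 'e x - x i 0) = (r%:R - 1) * dotv 'e x.
Proof. by rewrite sumrB sumr_const card_ord -dotv_evecE mulrBl mul1r mulr_natl. Qed.

Lemma dotv_center x y :
  dotv (r%:R *: x - dotv 'e x *: 'e) (r%:R *: y - dotv 'e y *: 'e) =
  r%:R * (r%:R * dotv x y - dotv 'e x * dotv 'e y).
Proof. by rewrite dotvBl !dotvBr !dotvZl !dotvZr dotv_evecvv !(dotvC _ 'e); ring. Qed.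

End InnerProduct.

Section SecondOrderCone.
Variables (R : realType) (r : nat).
Hypothesis r_gt1 : (1 < r)%N.
Implicit Types (q x z : 'cV[R]_r).
Local Notation "''e'" := (evec R r).
Local Notation rr := (r%:R : R).

Definition in_C_dual q := norm2 q <= dotv 'e q.

Let rr_ge2 : 2 <= rr. Proof. by rewrite (ler_nat R 2 r). Qed.

Lemma in_CP x : in_C x <-> 0 <= dotv 'e x /\ (rr - 1) * dotv x x <= dotv 'e x ^+ 2.
Proof.
have rr2 := rr_ge2; rewrite /in_C norm2E -sqrtrM; last lra.
by apply: sqrtr_le_iff; rewrite mulr_ge0 ?dotvv_ge0 //; lra.
Qed.

Lemma in_C_dualP q : in_C_dual q <-> 0 <= dotv 'e q /\ dotv q q <= dotv 'e q ^+ 2.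
Proof. by rewrite /in_C_dual norm2E; apply/sqrtr_le_iff/dotvv_ge0. Qed.

Lemma evec_in_C : in_C 'e.
Proof. by have := rr_ge2; rewrite in_CP dotv_evecvv; split; nra. Qed.

Lemma evecB_unitv_in_C i : in_C ('e - unitv R i).
Proof.
have := rr_ge2; rewrite in_CP dotvBl !dotvBr dotv_evecvv (dotvC (unitv R i)).
by rewrite !dotv_evec_unitv dotv_unitvv => ?; split; nra.
Qed.

(* Cauchy-Schwarz for the components of [q] and [x] orthogonal to [e]. *)
Lemma C_dual_dotv_ge0 q x : in_C_dual q -> in_C x -> 0 <= dotv q x.
Proof.
move=> /in_C_dualP[s_ge0 qq_le] /in_CP[t_ge0 xx_le].
have := cauchy_schwarz (rr *: q - dotv 'e q *: 'e) (rr *: x - dotv 'e x *: 'e).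
have := cauchy_schwarz 'e q; rewrite !dotv_center dotv_evecvv.
set s := dotv 'e q in s_ge0 qq_le *; set t := dotv 'e x in t_ge0 xx_le *.
set Q := dotv q q in qq_le *; set X := dotv x x in xx_le *.
set P := dotv q x => sQ cs.
have rr2 := rr_ge2.
have D_le : (rr * P - s * t) ^+ 2 <= (rr * Q - s ^+ 2) * (rr * X - t ^+ 2).
  rewrite -(ler_pM2l (_ : 0 < rr ^+ 2)); last by rewrite exprn_gt0 //; lra.
  have -> : rr ^+ 2 * (rr * P - s * t) ^+ 2 = (rr * (rr * P - s * t)) ^+ 2 by ring.
  by have -> : rr ^+ 2 * ((rr * Q - s ^+ 2) * (rr * X - t ^+ 2)) =
    rr * (rr * Q - s * s) * (rr * (rr * X - t * t)) by ring.
have : - (s * t) <= rr * P - s * t.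
  apply: (oppr_mul_le_of_sqr_le (c := rr - 1) _ _ s_ge0 t_ge0 _ _ D_le); [lra | lra | |].
  - by have := ler_wpM2l (ler0n R r) qq_le; lra.
  - by have := ler_wpM2l (ler0n R r) xx_le; lra.
by rewrite lerBDr addNr pmulr_rge0 //; lra.
Qed.

Lemma in_C_dual_of_dual q : (forall z, in_C z -> 0 <= dotv q z) -> in_C_dual q.
Proof.
move=> q_dual; apply/in_C_dualP.
have rr2 := rr_ge2.
have s_ge0 : 0 <= dotv 'e q by rewrite dotvC; apply/q_dual/evec_in_C.
have := cauchy_schwarz 'e q; rewrite dotv_evecvv.
set s := dotv 'e q in s_ge0 *; set X := dotv q q => sX.
pose w := Num.sqrt ((rr - 1) * (rr * X - s ^+ 2)).
have w_ge0 : 0 <= w := sqrtr_ge0 _.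
have w2 : w ^+ 2 = (rr - 1) * (rr * X - s ^+ 2) by rewrite sqr_sqrtr // mulr_ge0 //; lra.
have rr_neq0 : rr != 0 by apply/eqP; lra.
(* [z = a e - q] with [a] chosen to put [z] on the boundary of [C]; then
   [0 <= q.z] reads [r X - s^2 <= s w], and squaring gives [X <= s^2]. *)
pose z := ((s + w) / rr) *: 'e - q.
have ez : dotv 'e z = w.
  by rewrite dotvBr dotvZr dotv_evecvv -/s divfK //; ring.
have zz : (rr - 1) * dotv z z = w ^+ 2.
  have -> : dotv z z = (w ^+ 2 + rr * X - s ^+ 2) / rr.
    by rewrite dotvBl !dotvBr !dotvZl !dotvZr dotv_evecvv (dotvC q 'e) -/s -/X; field.
  by rewrite w2; field.
have /q_dual : in_C z by apply/in_CP; rewrite ez zz.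
rewrite dotvBr dotvZr (dotvC q 'e) -/s -/X => qz_ge0.
have u_le_sw : rr * X - s ^+ 2 <= s * w.
  have := mulr_ge0 (ler0n R r) qz_ge0.
  have -> : rr * ((s + w) / rr * s - X) = (s + w) * s - rr * X by field.
  lra.
have u_sqr_le : (rr * X - s ^+ 2) ^+ 2 <= s ^+ 2 * w ^+ 2.
  by rewrite -exprMn ler_sqr ?nnegrE ?mulr_ge0 //; lra.
rewrite w2 in u_sqr_le; split=> //.
have [u_gt0 | u_le0] := ltP 0 (rr * X - s ^+ 2); nra.
Qed.

End SecondOrderCone.

Section Farkas.
Variables (R : realType) (r : nat).
Implicit Types (a b v w y : 'cV[R]_r) (s : seq 'cV[R]_r).

Fixpoint conic_comb s b : Prop :=
  if s is a :: s' then exists2 t, 0 <= t & conic_comb s' (b - t *: a) else b = 0.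

Lemma conic_comb_dotv_ge0 y s b :
  all (fun a => 0 <= dotv y a) s -> conic_comb s b -> 0 <= dotv y b.
Proof.
elim: s b => [|a s IHs] b /=; first by move=> _ ->; rewrite dotv0r.
move=> /andP[ya_ge0 ys_ge0] [t t_ge0 /(IHs _ ys_ge0)].
by rewrite dotvBr dotvZr subr_ge0; apply: le_trans; rewrite mulr_ge0.
Qed.

Definition oblique_proj y a v := v - (dotv y v / dotv y a) *: a.

Lemma dotv_oblique_proj y a w v :
  dotv (w - (dotv w a / dotv y a) *: y) v = dotv w (oblique_proj y a v).
Proof. by rewrite /oblique_proj dotvBl dotvZl dotvBr dotvZr; ring. Qed.

Lemma oblique_proj_id y a : dotv y a != 0 -> oblique_proj y a a = 0.
Proof. by move=> ya_neq0; rewrite /oblique_proj divff // scale1r subrr. Qed.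

Lemma conic_comb_oblique_proj y a s w :
  conic_comb (map (oblique_proj y a) s) (oblique_proj y a w) ->
  exists u, conic_comb s (w - u *: a).
Proof.
elim: s w => [|a1 s IHs] w /=; first by exists (dotv y w / dotv y a).
case=> t t_ge0; rewrite (_ : _ - _ = oblique_proj y a (w - t *: a1)); last first.
  by rewrite /oblique_proj dotvBr dotvZr; apply/matrixP => i j; rewrite !mxE; ring.
by case/IHs=> u w_comb; exists u, t; rewrite // addrAC.
Qed.

Lemma farkas_seq s b :
  conic_comb s b \/ exists2 y, all (fun a => 0 <= dotv y a) s & dotv y b < 0.
Proof.
have [m] := ubnP (size s); elim: m s b => // m IHm [|a s] b /=.
  move=> _; have [-> | b_neq0] := eqVneq b 0; [by left | right; exists (- b) => //].
  by rewrite dotvNl oppr_lt0 lt_def dotvv_eq0 b_neq0 dotvv_ge0.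
rewrite ltnS => s_lt.
have [b_comb | [y ys_ge0 yb_lt0]] := IHm s b s_lt.
  by left; exists 0; rewrite // scale0r subr0.
have [ya_ge0 | ya_lt0] := leP 0 (dotv y a); first by right; exists y; rewrite //= ya_ge0.
(* Fourier-Motzkin step: project onto the hyperplane [y.v = 0] along [a]. *)
have ya_neq0 : dotv y a != 0 by rewrite lt_eqF.
have ps_lt : (size (map (oblique_proj y a) s) < m)%N by rewrite size_map.
have [pb_comb | [w ws_ge0 wb_lt0]] := IHm _ (oblique_proj y a b) ps_lt.
  have [u b_comb] := conic_comb_oblique_proj pb_comb.
  left; exists u => //.
  by have := conic_comb_dotv_ge0 ys_ge0 b_comb; rewrite dotvBr dotvZr subr_ge0; nra.
right; exists (w - (dotv w a / dotv y a) *: y); last by rewrite dotv_oblique_proj.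
rewrite /= dotv_oblique_proj oblique_proj_id // dotv0r lexx /=.
by move: ws_ge0; rewrite all_map; apply: sub_all => v /=; rewrite dotv_oblique_proj.
Qed.

End Farkas.

Section ConeOfMatrix.
Variables (R : realType) (r n : nat) (H : 'M[R]_(r, n)).
Implicit Types (x y : 'cV[R]_r).

Lemma dotv_mulmx y (w : 'cV[R]_n) : dotv y (H *m w) = \sum_j dotv y (col j H) * w j 0.
Proof.
rewrite /dotv; under eq_bigr => i _ do rewrite mxE mulr_sumr.
rewrite exchange_big /=; apply: eq_bigr => j _; rewrite mulr_suml.
by apply: eq_bigr => i _; rewrite !mxE mulrA.
Qed.

Lemma in_dual_coneP y : in_dual_cone H y <-> forall j, 0 <= dotv y (col j H).
Proof.
split=> [y_dual j | y_cols _ [w [w_ge0 ->]]].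
  apply: y_dual; exists (delta_mx j 0); rewrite -colE; split=> // i k.
  by rewrite mxE ler0n.
by rewrite dotv_mulmx sumr_ge0 // => j _; rewrite mulr_ge0.
Qed.

Lemma nonneg_trmx_mulmxP y : nonneg_mx (H^T *m y) <-> in_dual_cone H y.
Proof.
have coordE j : (H^T *m y) j 0 = dotv y (col j H).
  by rewrite mxE; apply: eq_bigr => i _; rewrite !mxE mulrC.
rewrite in_dual_coneP; split=> [y_ge0 j | y_cols j k]; first by rewrite -coordE.
by rewrite (ord1 k) coordE.
Qed.

Lemma in_dual_coneD x y : in_dual_cone H x -> in_dual_cone H y -> in_dual_cone H (x + y).
Proof. by move=> x_dual y_dual z z_cone; rewrite dotvDl addr_ge0 ?x_dual ?y_dual. Qed.

Lemma in_dual_coneZ a y : 0 <= a -> in_dual_cone H y -> in_dual_cone H (a *: y).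
Proof. by move=> a_ge0 y_dual z z_cone; rewrite dotvZl mulr_ge0 ?y_dual. Qed.

Lemma nonneg_in_dual_cone y : nonneg_mx H -> nonneg_mx y -> in_dual_cone H y.
Proof.
move=> H_ge0 y_ge0; apply/in_dual_coneP => j.
by rewrite sumr_ge0 // => i _; rewrite !mxE mulr_ge0.
Qed.

Lemma conic_comb_cols_in_cone (js : seq 'I_n) x :
  conic_comb (map (fun j => col j H) js) x -> in_cone H x.
Proof.
elim: js x => [|j js IHjs] x /=.
  by move=> ->; exists 0; rewrite mulmx0; split=> // i k; rewrite mxE.
case=> t t_ge0 /IHjs[w [w_ge0 x_eq]]; exists (w + t *: delta_mx j 0); split.
  by move=> i k; rewrite !mxE addr_ge0 ?mulr_ge0.
by rewrite mulmxDr -scalemxAr -colE -x_eq subrK.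
Qed.

Lemma farkas x : in_cone H x \/ exists2 y, in_dual_cone H y & dotv y x < 0.
Proof.
have [x_comb | [y y_cols yx_lt0]] := farkas_seq (map (fun j => col j H) (enum 'I_n)) x.
  by left; exact: conic_comb_cols_in_cone x_comb.
right; exists y => //; apply/in_dual_coneP => j.
by move: y_cols; rewrite all_map => /allP/(_ j (mem_enum _ j)).
Qed.

End ConeOfMatrix.

Section Segment.
Variables (R : realType) (r : nat) (y : 'cV[R]_r).
Hypotheses (r_gt0 : (0 < r)%N) (sumv_y : dotv (evec R r) y = 1).
Local Notation "''e'" := (evec R r).
Local Notation rr := (r%:R : R).

Definition seg t := ((1 - t) / rr) *: 'e + t *: y.

Let rr_neq0 : rr != 0. Proof. by rewrite pnatr_eq0 -lt0n. Qed.

Lemma seg_coord t i : seg t i 0 = (1 - t) / rr + t * y i 0.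
Proof. by rewrite !mxE mulr1. Qed.

Lemma sumv_seg t : dotv 'e (seg t) = 1.
Proof. by rewrite dotvDr !dotvZr dotv_evecvv sumv_y; field. Qed.

Lemma dotv_seg t : dotv (seg t) (seg t) = rr^-1 + t ^+ 2 * (dotv y y - rr^-1).
Proof.
rewrite dotvDl !dotvDr !dotvZl !dotvZr dotv_evecvv sumv_y (dotvC y).
by rewrite sumv_y; field.
Qed.

End Segment.

Section SSC.
Variables (R : realType) (r n : nat) (H : 'M[R]_(r, n)).
Hypotheses (r_gt1 : (1 < r)%N) (H_ge0 : nonneg_mx H).
Local Notation "''e'" := (evec R r).

Let i0 : 'I_r := Ordinal (ltnW r_gt1).

Lemma evec_in_dual_cone : in_dual_cone H 'e.
Proof. by apply: nonneg_in_dual_cone => // i j; rewrite mxE ler01. Qed.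

Lemma unitv_in_dual_cone i : in_dual_cone H (unitv R i).
Proof. by apply: nonneg_in_dual_cone => // j k; rewrite mxE ler0n. Qed.

Lemma feasible_of_norm2_le1 x :
  in_dual_cone H x -> dotv 'e x = 1 -> norm2 x <= 1 -> feasible H x.
Proof.
move=> x_dual ex1 x_le1; split=> //; first exact/nonneg_trmx_mulmxP.
by move=> i; rewrite -ler_norml (le_trans (abs_coord_le_norm2 x i)).
Qed.

Lemma feasible_unitv i : feasible H (unitv R i).
Proof.
apply: feasible_of_norm2_le1; [exact: unitv_in_dual_cone | exact: dotv_evec_unitv |].
by rewrite norm2_unitv.
Qed.

Lemma SSC1_dual_cone_sub q : SSC1 H -> in_dual_cone H q -> in_C_dual q.
Proof. by move=> S1 q_dual; apply: in_C_dual_of_dual => // z /S1; exact: q_dual. Qed.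

Lemma SSC1_of_dual_cone_sub : (forall q, in_dual_cone H q -> in_C_dual q) -> SSC1 H.
Proof.
move=> sub x xC; have [//|[y /sub yC yx_lt0]] := farkas H x.
by have := C_dual_dotv_ge0 r_gt1 yC xC; rewrite leNgt yx_lt0.
Qed.

Lemma SSC1_norm2_le1 x : SSC1 H -> feasible H x -> norm2 x <= 1.
Proof.
by move=> S1 [ex1 /nonneg_trmx_mulmxP x_dual _]; rewrite -ex1; exact: SSC1_dual_cone_sub.
Qed.

Lemma SSC1_opt_value : SSC1 H -> is_opt_value H 1.
Proof.
move=> S1; split; last by move=> x; exact: SSC1_norm2_le1.
by exists (unitv R i0); split; [exact: feasible_unitv | exact: norm2_unitv].
Qed.

Lemma SSC_opt_solutionP x : SSC H -> is_opt_solution H x <-> exists i, x = unitv R i.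
Proof.
move=> [S1 S2]; split=> [[x_feas x_max] | [i ->]]; last first.
  by split=> [|y /(SSC1_norm2_le1 S1)]; [exact: feasible_unitv | rewrite norm2_unitv].
have x_norm1 : norm2 x = 1.
  apply/le_anti; rewrite SSC1_norm2_le1 //= -(norm2_unitv R i0) x_max //.
  exact: feasible_unitv.
have [ex1 /nonneg_trmx_mulmxP x_dual _] := x_feas.
have [i [a x_eq]] := S2 x x_dual (etrans ex1 (esym x_norm1)).
exists i; move: ex1; rewrite x_eq dotvZr dotv_evec_unitv mulr1 => ->.
by rewrite scale1r.
Qed.

Section Converse.
Hypothesis evecB_unitv_in_cone : forall i, in_cone H ('e - unitv R i).
Hypothesis norm2_le1_of_feasible : forall x, feasible H x -> norm2 x <= 1.
Hypothesis opt_solution_unitv :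
  forall x, is_opt_solution H x -> exists i, x = unitv R i.

Lemma coord_le_sumv q i : in_dual_cone H q -> q i 0 <= dotv 'e q.
Proof.
by move/(_ _ (evecB_unitv_in_cone i)); rewrite dotvBr dotv_unitv (dotvC q) subr_ge0.
Qed.

Lemma feasible_norm2_eq1_unitv x :
  feasible H x -> norm2 x = 1 -> exists i, x = unitv R i.
Proof.
move=> x_feas x_norm1; apply: opt_solution_unitv; split=> // y.
by move/norm2_le1_of_feasible; rewrite x_norm1.
Qed.

Lemma seg_in_dual_cone y t : in_dual_cone H y -> 0 <= t <= 1 -> in_dual_cone H (seg y t).
Proof.
move=> y_dual /andP[t_ge0 t_le1].
apply: in_dual_coneD; apply: in_dual_coneZ; rewrite ?divr_ge0 ?subr_ge0 //.
exact: evec_in_dual_cone.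
Qed.

Lemma seg_hits_unitv y : in_dual_cone H y -> dotv 'e y = 1 -> 1 < dotv y y ->
  exists2 t, 0 <= t < 1 & exists k, seg y t = unitv R k.
Proof.
move=> y_dual ey yy_gt1; have r_gt0 := ltnW r_gt1.
have c_lt1 : r%:R^-1 < 1 :> R by rewrite invf_lt1 ?ltr1n // ltr0n.
have c_gt0 : 0 < r%:R^-1 :> R by rewrite invr_gt0 ltr0n.
pose t := Num.sqrt ((1 - r%:R^-1) / (dotv y y - r%:R^-1)).
have Yc_gt0 : 0 < dotv y y - r%:R^-1 by lra.
have t2 : t ^+ 2 * (dotv y y - r%:R^-1) = 1 - r%:R^-1.
  rewrite sqr_sqrtr ?divfK ?gt_eqF //.
  by rewrite divr_ge0 ?ltW // subr_gt0.
have t_ge0 : 0 <= t := sqrtr_ge0 _.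
have t_lt1 : t < 1.
  rewrite ltNge; apply/negP => /(exprn_ege1 2) /(ler_wpM2r (ltW Yc_gt0)).
  by rewrite t2; lra.
have seg_norm1 : norm2 (seg y t) = 1.
  by rewrite norm2E dotv_seg // t2 addrC subrK sqrtr1.
exists t; first by rewrite t_ge0 t_lt1.
apply: (feasible_norm2_eq1_unitv _ seg_norm1); apply: feasible_of_norm2_le1.
- by apply: seg_in_dual_cone; rewrite // t_ge0 ltW.
- exact: sumv_seg.
- by rewrite seg_norm1.
Qed.

(* At [e_k] the constraints [-1 <= x_i] are slack, and the step [d] is small
   enough to keep them. *)
Lemma seg_past_unitv_feasible y t k :
  in_dual_cone H y -> dotv 'e y = 1 -> 0 <= t < 1 -> seg y t = unitv R k ->
  feasible H (seg y (t + (1 - t) / (1 + norm2 y))).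
Proof.
move=> y_dual ey /andP[t_ge0 t_lt1] seg_k; have r_gt0 := ltnW r_gt1.
set d := (1 - t) / (1 + norm2 y).
have N_ge0 := norm2_ge0 y.
have d_gt0 : 0 < d by rewrite divr_gt0 //; lra.
have dN : d * (1 + norm2 y) = 1 - t by rewrite divfK //; apply/eqP; lra.
have td_le1 : t + d <= 1 by nra.
have seg_dual : in_dual_cone H (seg y (t + d)).
  by apply: (seg_in_dual_cone y_dual); apply/andP; split; lra.
split; [exact: sumv_seg | exact/nonneg_trmx_mulmxP | move=> i].
apply/andP; split; last by rewrite -(sumv_seg r_gt0 ey (t + d)); exact: coord_le_sumv.
have -> : seg y (t + d) i 0 = unitv R k i 0 + d * (y i 0 - r%:R^-1).
  by rewrite -seg_k !seg_coord; field; rewrite pnatr_eq0 -lt0n.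
have ek_ge0 : 0 <= unitv R k i 0 by rewrite mxE ler0n.
have c_le1 : r%:R^-1 <= 1 :> R by rewrite invf_le1 ?ler1n // ltr0n.
have yi_ge : - norm2 y <= y i 0.
  by have := abs_coord_le_norm2 y i; rewrite ler_norml => /andP[].
have : d * (- norm2 y - 1) <= d * (y i 0 - r%:R^-1) by rewrite ler_pM2l //; lra.
lra.
Qed.

Lemma dual_cone_dotvv_le1 y : in_dual_cone H y -> dotv 'e y = 1 -> dotv y y <= 1.
Proof.
move=> y_dual ey; rewrite leNgt; apply/negP => yy_gt1; have r_gt0 := ltnW r_gt1.
have [t t01 [k seg_k]] := seg_hits_unitv y_dual ey yy_gt1.
have := norm2_le1_of_feasible (seg_past_unitv_feasible y_dual ey t01 seg_k).
move=> /(exprn_ile1 2 (norm2_ge0 _)); rewrite sqr_norm2 dotv_seg //.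
have := dotv_seg r_gt0 ey t; rewrite seg_k dotv_unitvv.
set d := (1 - t) / (1 + norm2 y); case/andP: t01 => t_ge0 t_lt1.
have d_gt0 : 0 < d by rewrite divr_gt0 //; have := norm2_ge0 y; lra.
have c_lt1 : r%:R^-1 < 1 :> R by rewrite invf_lt1 ?ltr1n // ltr0n.
have : t ^+ 2 * (dotv y y - r%:R^-1) < (t + d) ^+ 2 * (dotv y y - r%:R^-1).
  by rewrite ltr_pM2r; [nra | lra].
lra.
Qed.

Lemma dual_cone_sumv_ge0 q : in_dual_cone H q -> 0 <= dotv 'e q.
Proof.
move=> q_dual; have : 0 <= \sum_i (dotv 'e q - q i 0).
  by rewrite sumr_ge0 // => i _; rewrite subr_ge0 coord_le_sumv.
by rewrite sum_sumv_subr pmulr_rge0 // subr_gt0 ltr1n.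
Qed.

Lemma dual_cone_sumv_eq0 q : in_dual_cone H q -> dotv 'e q = 0 -> q = 0.
Proof.
move=> q_dual s0; apply/matrixP=> i j; rewrite (ord1 j) mxE; apply/eqP.
rewrite -subr_eq0 -oppr_eq0 opprB -{1}s0; apply/eqP; move: i isT.
apply: psumr_eq0P; first by move=> i _; rewrite subr_ge0 coord_le_sumv.
by rewrite sum_sumv_subr s0 mulr0.
Qed.

Lemma dual_cone_sub_C_dual q : in_dual_cone H q -> in_C_dual q.
Proof.
move=> q_dual; apply/in_C_dualP; set s := dotv 'e q.
split; first exact: dual_cone_sumv_ge0.
have [s0 | s_neq0] := eqVneq s 0.
  by rewrite (dual_cone_sumv_eq0 q_dual s0) s0 dotv0r expr0n.
have s_gt0 : 0 < s by rewrite lt_def s_neq0 dual_cone_sumv_ge0.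
have y_dual : in_dual_cone H (s^-1 *: q) by apply: in_dual_coneZ; rewrite ?invr_ge0 ?ltW.
have := dual_cone_dotvv_le1 y_dual; rewrite dotvZr -/s mulVf // => /(_ erefl).
rewrite dotvZl dotvZr => yy_le1.
have -> : dotv q q = s ^+ 2 * (s^-1 * (s^-1 * dotv q q)) by field.
by rewrite -[leRHS]mulr1 ler_wpM2l ?sqr_ge0.
Qed.

Lemma SSC2_of_opt : SSC2 H.
Proof.
move=> q q_dual eq_norm; set s := dotv 'e q in eq_norm.
have [s0 | s_neq0] := eqVneq s 0.
  exists i0, 0; rewrite scale0r; apply/eqP.
  by rewrite -dotvv_eq0 -sqr_norm2 -eq_norm s0 expr0n.
have s_gt0 : 0 < s by rewrite lt_def s_neq0 eq_norm norm2_ge0.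
have y_norm1 : norm2 (s^-1 *: q) = 1.
  by rewrite norm2Z -eq_norm gtr0_norm ?invr_gt0 // mulVf.
have [k y_eq] : exists k, s^-1 *: q = unitv R k.
  apply: (feasible_norm2_eq1_unitv _ y_norm1); apply: feasible_of_norm2_le1.
  - by apply: in_dual_coneZ; rewrite ?invr_ge0 ?ltW.
  - by rewrite dotvZr -/s mulVf.
  - by rewrite y_norm1.
by exists k, s; rewrite -y_eq scalerA divff // scale1r.
Qed.

End Converse.

End SSC.

Theorem theorem2 (R : realType) (r n : nat) (Hr : (2 <= r)%N)
    (H : 'M[R]_(r, n)) (Hnn : nonneg_mx H) :
  SSC H <->
  ((forall i : 'I_r, in_cone H (evec R r - unitv R i)) /\
   (is_opt_value H 1 /\
    forall x : 'cV[R]_r, is_opt_solution H x <-> exists i : 'I_r, x = unitv R i)).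
Proof.
split=> [[S1 S2] | [evecB_in_cone [[_ norm2_le1] opt_solutionP]]].
  split=> [i | ]; first exact/S1/evecB_unitv_in_C.
  split=> [ | x]; first exact: (SSC1_opt_value Hr Hnn S1).
  exact: (SSC_opt_solutionP Hr Hnn x (conj S1 S2)).
have opt_unitv x : is_opt_solution H x -> exists i, x = unitv R i.
  by case: (opt_solutionP x).
split; last exact: (SSC2_of_opt Hr norm2_le1 opt_unitv).
apply: (SSC1_of_dual_cone_sub Hr) => q.
exact: (dual_cone_sub_C_dual Hr Hnn evecB_in_cone norm2_le1 opt_unitv).
Qed.
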